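(* Let $\mathcal{D}_R$ be the class of all finite reflexive digraphs and let $D\in\mathcal{D}_R$. The class $\mathrm{Av}(D)=\{E\in\mathcal{D}_R: D\not\preceq E\}$, with respect to the homomorphic image ordering $\preceq$, is well quasi-ordered if and only if $D$ is isomorphic to $\overrightarrow{N}_{n,k}$ for some natural numbers $n,k$ with $2k<n$.
   Context: A digraph is a set $D$ with a binary relation $E(D)\subseteq D\times D$; reflexive means every loop $(x,x)$ is an edge. For $2k\le n$, $\overrightarrow{N}_{n,k}$ is the digraph on $\{1,\dots,n\}$ with edge set $\{(i,j):1\le i,j\le n\}\setminus\{(1,2),(3,4),\dots,(2k-1,2k)\}$. A homomorphism maps edges to edges. Homomorphic image ordering: $A\preceq B$ iff there is a surjective homomorphism $B\to A$. Well quasi-ordered means no infinite strictly decreasing sequence and no infinite antichain; digraphs considered up to isomorphism. *)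

From mathcomp Require Import all_boot.
Set Implicit Arguments. Unset Strict Implicit. Unset Printing Implicit Defensive.

(* A finite digraph, represented (up to isomorphism) on the vertex set
   'I_n = {0,...,n-1} with a (boolean) edge relation. *)
Record digraph := Digraph { dsize : nat; dedge : rel 'I_dsize }.

Definition vert (G : digraph) := 'I_(dsize G).

Definition reflexive_dg (G : digraph) : Prop := forall x : vert G, dedge x x.

Definition is_hom (G H : digraph) (f : vert G -> vert H) : Prop :=
  forall x y : vert G, dedge x y -> dedge (f x) (f y).

Definition himg_le (A B : digraph) : Prop :=
  exists f : vert B -> vert A, is_hom f /\ (forall a : vert A, exists b, f b = a).

Definition dg_iso (G H : digraph) : Prop :=
  exists f : vert G -> vert H, bijective f /\
    (forall x y : vert G, dedge (f x) (f y) = dedge x y).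

(* N_{n,k}: vertices 1..n (here 0..n-1), all pairs are edges except
   (1,2),(3,4),...,(2k-1,2k), i.e. (2m,2m+1) for m < k in 0-based indexing. *)
Definition N_edge (n k : nat) : rel 'I_n :=
  fun i j => ~~ [&& ~~ odd (nat_of_ord i), nat_of_ord j == (nat_of_ord i).+1 & nat_of_ord j < 2 * k].

Definition N_dg (n k : nat) : digraph := @Digraph n (@N_edge n k).

Definition wqo_on (C : digraph -> Prop) (le : digraph -> digraph -> Prop) : Prop :=
  (~ exists s : nat -> digraph,
       (forall i, C (s i)) /\ (forall i, le (s i.+1) (s i) /\ ~ le (s i) (s i.+1)))
  /\
  (~ exists s : nat -> digraph,
       (forall i, C (s i)) /\ (forall i j, i <> j -> ~ le (s i) (s j))).

Definition Av (D : digraph) (E : digraph) : Prop :=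
  reflexive_dg E /\ ~ himg_le D E.

From Stdlib Require Import Classical IndefiniteDescription.
From mathcomp Require Import all_boot zify.
Set Implicit Arguments. Unset Strict Implicit. Unset Printing Implicit Defensive.

(* (<-) Greedily collecting disjoint non-edges of a reflexive digraph E
   either yields k of them, and then N_{n,k} is an image of E as soon as
   n <= |E|, or stops at a "core" S, a set of fewer than 2k vertices outside
   of which all pairs are edges.  So every E in Av(N_{n,k}) has a core of
   fewer than n vertices.  A surjective homomorphism E' -> E exists as soon
   as the cores induce the same digraph and, for each of the finitely many
   ways an outside vertex can be adjacent to the core, the class of such
   vertices in E is no larger than in E' and empty only if it is in E'.
   Dickson's lemma finds such a pair in every sequence.  A strictly
   descending chain would keep shrinking the vertex count or, at constant
   vertex count, growing the edge count.
   (->) In an image of N_{2j,j} (the complement of a perfect matching) with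
   fewer than 2j vertices, the non-edges form a matching missing some
   vertex, so it is some N_{n,k} with 2k < n.  Unless D is of this form, the
   pairwise incomparable N_{2j,j}, j large, form an infinite antichain in
   Av(D). *)

(* [<=] on nat with 0 made incomparable to positive numbers; still a well
   quasi-order. *)
Definition zle (a b : nat) : Prop := a <= b /\ (a == 0) = (b == 0).

Lemma zle_refl a : zle a a. Proof. by []. Qed.

Lemma zle_trans b a c : zle a b -> zle b c -> zle a c.
Proof. by move=> [ab ab0] [bc bc0]; split; [exact: leq_trans bc | rewrite ab0]. Qed.

Lemma zle_bool (a b : bool) : zle a b -> a = b.
Proof. by case: a; case: b => -[]. Qed.

Lemma exists_min_after (u : nat -> nat) p :
  exists q, p < q /\ forall r, p < r -> u q <= u r.
Proof.
suff min_below m r : p < r -> u r <= m -> exists q, p < q /\ forall r, p < r -> u q <= u r.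
  exact: (min_below (u p.+1) p.+1).
elim: m r => [|m IH] r lt_pr le_urm.
  by exists r; split=> // r' _; move: le_urm; rewrite leqn0 => /eqP ->.
have [[r' [lt_pr' lt_u]] | no_lower] := classic (exists r', p < r' /\ u r' < u r).
  by apply: (IH r') => //; rewrite -ltnS (leq_trans lt_u).
exists r; split=> // r' lt_pr'; rewrite leqNgt; apply/negP => lt_u.
by apply: no_lower; exists r'.
Qed.

Lemma nondecreasing_subseq (u : nat -> nat) : exists phi : nat -> nat,
  (forall t, phi t < phi t.+1) /\ (forall t, u (phi t) <= u (phi t.+1)).
Proof.
have [next nextP] := functional_choice _ (exists_min_after u).
pose phi t := iter t.+1 next 0.
have phi_inc t : phi t < phi t.+1 by case: (nextP (phi t)).
exists phi; split=> // t.
have [lt_next min_next] := nextP (iter t next 0).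
exact: min_next (ltn_trans lt_next (phi_inc t)).
Qed.

Lemma zle_subseq (u : nat -> nat) : exists phi : nat -> nat,
  (forall t, phi t < phi t.+1) /\ (forall t, zle (u (phi t)) (u (phi t.+1))).
Proof.
have [phi [phi_inc u_mono]] := nondecreasing_subseq u.
have u_le := homo_leq (f := u \o phi) leqnn (fun b a c => @leq_trans b a c) u_mono.
have [[t0 u_pos] | u_zero] := classic (exists t0, 0 < u (phi t0)).
  have pos_from t : 0 < u (phi (t + t0)) by apply: leq_trans u_pos (u_le _ _ (leq_addl _ _)).
  exists (fun t => phi (t + t0)); split=> t; first exact: phi_inc.
  by split; [exact: u_mono | rewrite !eqn0Ngt !pos_from].
exists phi; split=> // t.
have z s : u (phi s) = 0.
  by apply/eqP; rewrite eqn0Ngt; apply/negP => pos; apply: u_zero; exists s.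
by rewrite !z.
Qed.

Lemma dickson_subseq (C : eqType) (cs : seq C) (x : nat -> C -> nat) :
  exists phi : nat -> nat, (forall t, phi t < phi t.+1) /\
    forall c t, c \in cs -> zle (x (phi t) c) (x (phi t.+1) c).
Proof.
elim: cs => [|c cs [phi [phi_inc x_good]]]; first by exists id.
have [psi [psi_inc c_good]] := zle_subseq (fun t => x (phi t) c).
exists (phi \o psi); split=> [t | c' t] /=.
  exact: (homo_ltn (r := fun a b => a < b) ltn_trans phi_inc (psi_inc t)).
rewrite inE => /predU1P[-> // | c'_cs].
apply: (homo_leq (f := fun t => x (phi t) c') zle_refl zle_trans _ (ltnW (psi_inc t))).
by move=> {}t; exact: x_good.
Qed.

Lemma dickson (C : finType) (x : nat -> C -> nat) :
  exists i j, i < j /\ forall c, zle (x i c) (x j c).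
Proof.
have [phi [phi_inc x_good]] := dickson_subseq (enum C) x.
by exists (phi 0), (phi 1); split=> // c; apply: x_good; rewrite mem_enum.
Qed.

Lemma himg_le_trans (A B C : digraph) : himg_le A B -> himg_le B C -> himg_le A C.
Proof.
move=> [f [f_hom f_onto]] [g [g_hom g_onto]]; exists (f \o g); split.
  by move=> x y /g_hom /f_hom.
by move=> a; have [b <-] := f_onto a; have [c <-] := g_onto b; exists c.
Qed.

Lemma himg_le_dsize (A B : digraph) : himg_le A B -> dsize A <= dsize B.
Proof.
move=> [f [_ f_onto]]; have [g fK] := functional_choice _ f_onto.
by have := leq_card _ (can_inj fK); rewrite !card_ord.
Qed.

Lemma dg_iso_himg_le (D N : digraph) : dg_iso D N -> himg_le D N.
Proof.
move=> [f [[g fK gK] f_edge]]; exists g; split; last by move=> a; exists (f a).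
by move=> x y; rewrite -f_edge !gK.
Qed.

Lemma Av_iso (D N E : digraph) : dg_iso D N -> Av D E -> Av N E.
Proof.
move=> isoDN [reflE notD]; split=> // leNE; apply: notD.
exact: himg_le_trans (dg_iso_himg_le isoDN) leNE.
Qed.

Lemma N_refl n k : reflexive_dg (N_dg n k).
Proof. by move=> i; rewrite /= /N_edge (ltn_eqF (ltnSn i)) andbF. Qed.

Lemma N_nonedgeP n k (i j : 'I_n) :
  reflect [/\ ~~ odd i, j = i.+1 :> nat & j < 2 * k] (~~ N_edge k i j).
Proof. by rewrite /N_edge negbK; apply: (iffP and3P) => -[? /eqP ? ?]. Qed.

Lemma N_nonedge_inj_l n k (i i' j : 'I_n) :
  ~~ N_edge k i j -> ~~ N_edge k i' j -> i = i'.
Proof.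
move=> /N_nonedgeP[_ ij _] /N_nonedgeP[_ i'j _].
by apply: val_inj; apply/eqP; rewrite -eqSS -ij -i'j.
Qed.

Lemma N_nonedge_inj_r n k (i j j' : 'I_n) :
  ~~ N_edge k i j -> ~~ N_edge k i j' -> j = j'.
Proof.
by move=> /N_nonedgeP[_ ij _] /N_nonedgeP[_ ij' _]; apply: val_inj; rewrite /= ij ij'.
Qed.

Section FlatPairs.
Variable T : eqType.
Implicit Types (P : seq (T * T)) (x : T).

Definition flat_pairs P : seq T := flatten [seq [:: p.1; p.2] | p <- P].

Lemma size_flat_pairs P : size (flat_pairs P) = 2 * size P.
Proof. by elim: P => //= p P IH; rewrite IH; lia. Qed.

Lemma ltn_size_flat_pairs i P : ((2 * i).+1 < size (flat_pairs P)) = (i < size P).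
Proof. by rewrite size_flat_pairs; apply/idP/idP; lia. Qed.

Lemma nth_flat_pairs x0 P i : i < size P ->
  nth x0 (flat_pairs P) (2 * i) = (nth (x0, x0) P i).1 /\
  nth x0 (flat_pairs P) (2 * i).+1 = (nth (x0, x0) P i).2.
Proof.
elim: P i => [|p P IH] [|i] // lt_i.
have -> : 2 * i.+1 = (2 * i).+2 by lia.
exact: IH.
Qed.

Lemma mem_flat_pairs x P : (x \in flat_pairs P) = has (fun p => x \in [:: p.1; p.2]) P.
Proof. by elim: P => //= p P IH; rewrite !inE IH orbA. Qed.

Lemma uniq_flat_pairs P : uniq P -> (forall p, p \in P -> p.1 != p.2) ->
  (forall p q x, p \in P -> q \in P -> x \in [:: p.1; p.2] -> x \in [:: q.1; q.2] -> p = q) ->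
  uniq (flat_pairs P).
Proof.
elim: P => //= p P IH /andP[pP uniqP] p_loopless P_disj.
have fresh x : x \in [:: p.1; p.2] -> x \notin flat_pairs P.
  move=> xp; rewrite mem_flat_pairs; apply/hasPn => q qP; apply/negP => xq.
  have pq : p = q by apply: (P_disj p q x); rewrite // inE ?eqxx ?qP ?orbT.
  by move: pP; rewrite pq qP.
rewrite inE negb_or p_loopless ?mem_head // !fresh ?inE ?eqxx ?orbT //=.
apply: IH => // [q qP | q r x qP rP]; first by apply: p_loopless; rewrite inE qP orbT.
by apply: P_disj; rewrite inE ?qP ?rP orbT.
Qed.
End FlatPairs.

Definition nonedge_matching (E : digraph) (P : seq (vert E * vert E)) :=
  uniq (flat_pairs P) /\ forall p, p \in P -> ~~ dedge p.1 p.2.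

Section MatchingOrder.
Variables (E : digraph) (P : seq (vert E * vert E)).
Hypothesis matchP : nonedge_matching P.

Definition match_order : seq (vert E) :=
  flat_pairs P ++ [seq v <- enum 'I_(dsize E) | v \notin flat_pairs P].

Definition match_rank (v : vert E) := index v match_order.

Lemma mem_match_order v : v \in match_order.
Proof. by rewrite mem_cat mem_filter mem_enum andbT orbN. Qed.

Lemma uniq_match_order : uniq match_order.
Proof.
rewrite cat_uniq matchP.1 filter_uniq ?enum_uniq // andbT /=.
by apply/hasPn => v; rewrite mem_filter => /andP[].
Qed.

Lemma size_match_order : size match_order = dsize E.
Proof.
rewrite -[RHS]size_enum_ord; apply: perm_size; apply: uniq_perm.
- exact: uniq_match_order.
- exact: enum_uniq.
- by move=> v; rewrite mem_match_order mem_enum.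
Qed.

Lemma match_rank_lt v : match_rank v < dsize E.
Proof. by rewrite -size_match_order index_mem mem_match_order. Qed.

Lemma match_rank_inj : injective match_rank.
Proof. by move=> u v; apply: (index_inj u); apply: mem_match_order. Qed.

Lemma match_rank_nth x0 i : i < dsize E -> match_rank (nth x0 match_order i) = i.
Proof. by move=> lt_i; rewrite /match_rank index_uniq ?size_match_order ?uniq_match_order. Qed.

Lemma match_rank_pair x0 i : i < size P ->
  match_rank (nth (x0, x0) P i).1 = 2 * i /\ match_rank (nth (x0, x0) P i).2 = (2 * i).+1.
Proof.
move=> lt_i; have [<- <-] := nth_flat_pairs x0 lt_i.
have lt_2i1 : (2 * i).+1 < size (flat_pairs P) by rewrite ltn_size_flat_pairs.
have lt_2i := ltnW lt_2i1.
by rewrite /match_rank !index_cat !mem_nth // !index_uniq // matchP.1.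
Qed.

Lemma match_rank_nonedge u v :
  [&& ~~ odd (match_rank u), match_rank v == (match_rank u).+1
    & match_rank v < 2 * size P] = ((u, v) \in P).
Proof.
rewrite -size_flat_pairs; apply/and3P/idP => [[even_u /eqP uv lt_v] | uvP].
  have [i iu] : exists i, match_rank u = 2 * i.
    by exists (match_rank u)./2; move: (even_halfK even_u); lia.
  have lt_i : i < size P by rewrite -ltn_size_flat_pairs -iu -uv.
  have [pu pv] := match_rank_pair u lt_i.
  have eu : (nth (u, u) P i).1 = u by apply: match_rank_inj; rewrite pu iu.
  have ev : (nth (u, u) P i).2 = v by apply: match_rank_inj; rewrite pv uv iu.
  have <- : nth (u, u) P i = (u, v) by move: eu ev; case: (nth _ P i) => a b /= -> ->.
  exact: mem_nth.
have lt_i : index (u, v) P < size P by rewrite index_mem.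
have := match_rank_pair u lt_i; rewrite nth_index //= => -[-> ->].
by rewrite oddM eqxx ltn_size_flat_pairs lt_i.
Qed.

Lemma N_himg_le_of_matching n : 2 * size P < n -> n <= dsize E ->
  himg_le (N_dg n (size P)) E.
Proof.
case: n => [|n] lt_Pn le_nE; first by rewrite ltn0 in lt_Pn.
exists (fun v => inord (minn (match_rank v) n)); split=> [u v uv | a].
  apply: contraLR uv => /N_nonedgeP; rewrite !inordK ?ltnS ?geq_minr //.
  move=> [even_u uv small_v].
  have [ru rv] : minn (match_rank u) n = match_rank u /\ minn (match_rank v) n = match_rank v.
    by lia.
  rewrite ru rv in even_u uv small_v.
  apply: (matchP.2 (u, v)); rewrite -match_rank_nonedge.
  by apply/and3P; split=> //; apply/eqP.
have lt_aE : a < dsize E by apply: leq_trans le_nE.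
exists (nth (Ordinal lt_aE) match_order a); apply: val_inj.
rewrite /= match_rank_nth // inordK ?ltnS ?geq_minr //.
by apply/minn_idPl; rewrite -ltnS.
Qed.

Lemma N_iso_of_matching : (forall u v, ~~ dedge u v -> (u, v) \in P) ->
  dg_iso E (N_dg (dsize E) (size P)).
Proof.
move=> nonedgeP; exists (fun v => Ordinal (match_rank_lt v)); split=> [|u v].
  by apply: injF_bij => u v /(congr1 val) /match_rank_inj.
rewrite /= /N_edge match_rank_nonedge.
case: (boolP (dedge u v)) => [uv | /nonedgeP -> //].
by apply: contraTN uv => /matchP.2.
Qed.

End MatchingOrder.

Definition is_core (E : digraph) (S : seq (vert E)) :=
  forall u v : vert E, u \notin S -> v \notin S -> dedge u v.

Lemma matching_or_core (E : digraph) k : reflexive_dg E ->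
  exists P : seq (vert E * vert E), nonedge_matching P /\
    (size P = k \/ size P < k /\ is_core (flat_pairs P)).
Proof.
move=> reflE; elim: k => [|k [P [[uniqP nonedgeP] [sizeP | [ltP coreP]]]]].
- by exists [::]; split; [split | left].
- have [[u [v [uP vP uv]]] | maximal] :=
    classic (exists u v, [/\ u \notin flat_pairs P, v \notin flat_pairs P & ~~ dedge u v]).
    have neq_uv : u != v by apply: contraNneq uv => ->; exact: reflE.
    exists ((u, v) :: P); split; last by left; rewrite /= sizeP.
    split=> [|p]; first by rewrite /= inE negb_or neq_uv uP vP uniqP.
    by rewrite inE => /predU1P[-> | /nonedgeP].
  exists P; split=> //; right; split; first by rewrite sizeP.
  move=> u v uP vP; apply/negPn/negP => uv; apply: maximal; by exists u, v.
- by exists P; split=> //; right; split=> //; exact: ltnW.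
Qed.

Lemma Av_N_core n k (E : digraph) : 2 * k < n -> Av (N_dg n k) E ->
  exists S : seq (vert E), [/\ uniq S, size S < n & is_core S].
Proof.
move=> lt_kn [reflE notN].
have [small | large] := ltnP (dsize E) n.
  exists (enum 'I_(dsize E)); rewrite enum_uniq size_enum_ord.
  by split=> // u v; rewrite mem_enum.
have [P [matchP [sizeP | [ltP coreP]]]] := matching_or_core k reflE.
  by case: notN; rewrite -sizeP; apply: N_himg_le_of_matching; rewrite ?sizeP.
exists (flat_pairs P); split=> //; first by case: matchP.
by rewrite size_flat_pairs; apply: leq_ltn_trans lt_kn; rewrite leq_mul2l ltnW ?orbT.
Qed.

Section CoreProfile.
Variables (n : nat) (E : digraph).
Implicit Types (S : seq (vert E)) (v : vert E).

Definition adj S (p q : nat) : bool :=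
  nth false (nth [::] [seq [seq dedge u w | w <- S] | u <- S] p) q.

Definition vtype S v : {ffun 'I_n -> bool * bool} :=
  [ffun p : 'I_n => nth (false, false) [seq (dedge u v, dedge v u) | u <- S] p].

Definition type_class S (tau : {ffun 'I_n -> bool * bool}) : seq (vert E) :=
  [seq v <- enum 'I_(dsize E) | (v \notin S) && (vtype S v == tau)].

(* The boolean coordinates are compared by [zle], i.e. for equality: they
   record the size of [S] and the digraph induced on [S]. *)
Definition profile_index := ('I_n.+1 + 'I_n * 'I_n + {ffun 'I_n -> bool * bool})%type.

Definition profile S (c : profile_index) : nat :=
  match c with
  | inl (inl b) => size S == b
  | inl (inr (p, q)) => adj S p q
  | inr tau => size (type_class S tau)
  end.

Lemma adjE S x p q : p < size S -> q < size S ->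
  adj S p q = dedge (nth x S p) (nth x S q).
Proof. by move=> lt_p lt_q; rewrite /adj (nth_map x) // (nth_map x). Qed.

Lemma vtypeE S v x (p : 'I_n) : p < size S ->
  vtype S v p = (dedge (nth x S p) v, dedge v (nth x S p)).
Proof. by move=> lt_p; rewrite ffunE (nth_map x). Qed.

Lemma mem_type_class S tau v : (v \in type_class S tau) = (v \notin S) && (vtype S v == tau).
Proof. by rewrite mem_filter mem_enum andbT. Qed.

Lemma uniq_type_class S tau : uniq (type_class S tau).
Proof. by rewrite filter_uniq ?enum_uniq. Qed.

End CoreProfile.

Definition stretch (A B : eqType) (s : seq A) (t : seq B) (a0 : A) (b : B) : A :=
  nth a0 s (minn (index b t) (size s).-1).

Lemma stretch_index (A B : eqType) (s : seq A) (t : seq B) a0 b :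
  index b t < size s -> stretch s t a0 b = nth a0 s (index b t).
Proof. by move=> lt_bs; rewrite /stretch (minn_idPl _) // -ltnS prednK // (leq_ltn_trans _ lt_bs). Qed.

Lemma mem_stretch (A B : eqType) (s : seq A) (t : seq B) a0 b :
  0 < size s -> stretch s t a0 b \in s.
Proof. by move=> s_gt0; rewrite mem_nth // (leq_ltn_trans (geq_minr _ _)) // prednK. Qed.

Lemma stretch_onto (A B : eqType) (s : seq A) (t : seq B) a :
  uniq t -> size s <= size t -> a \in s -> exists2 b, b \in t & forall a0, stretch s t a0 b = a.
Proof.
move=> uniq_t le_st a_s.
have lt_at : index a s < size t by apply: leq_trans le_st; rewrite index_mem.
case: t uniq_t le_st lt_at => // b0 t' uniq_t le_st lt_at.
exists (nth b0 (b0 :: t') (index a s)); first exact: mem_nth.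
by move=> a0; rewrite stretch_index index_uniq ?nth_index ?index_mem.
Qed.

Section CoreMap.
Variables (n : nat) (E1 E2 : digraph) (S1 : seq (vert E1)) (S2 : seq (vert E2)).
Hypotheses (sizeS : size S1 = size S2) (le_S1n : size S1 <= n).
Hypothesis class_pos : forall tau : {ffun 'I_n -> bool * bool},
  0 < size (type_class S2 tau) -> 0 < size (type_class S1 tau).
Variable dflt : vert E2 -> vert E1.

Definition core_map (v : vert E2) : vert E1 :=
  if v \in S2 then stretch S1 S2 (dflt v) v
  else stretch (type_class S1 (vtype n S2 v)) (type_class S2 (vtype n S2 v)) (dflt v) v.

Lemma core_map_in v x : v \in S2 -> core_map v = nth x S1 (index v S2).
Proof.
move=> vS; have lt_v : index v S2 < size S1 by rewrite sizeS index_mem.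
by rewrite /core_map vS stretch_index // (set_nth_default x).
Qed.

Lemma core_map_out v : v \notin S2 ->
  core_map v \notin S1 /\ vtype n S1 (core_map v) = vtype n S2 v.
Proof.
move=> vS; have v_cls : v \in type_class S2 (vtype n S2 v) by rewrite mem_type_class vS eqxx.
have cls_pos : 0 < size (type_class S1 (vtype n S2 v)).
  by apply: class_pos; rewrite -has_predT; apply/hasP; exists v.
have := mem_stretch (type_class S2 (vtype n S2 v)) (dflt v) v cls_pos.
by rewrite /core_map (negbTE vS) mem_type_class => /andP[? /eqP].
Qed.

Lemma core_map_cross u v : u \in S2 -> v \notin S2 ->
  (dedge (core_map u) (core_map v), dedge (core_map v) (core_map u)) = (dedge u v, dedge v u).
Proof.
move=> uS vS; have lt_u : index u S2 < size S1 by rewrite sizeS index_mem.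
have := congr1 (fun g : {ffun 'I_n -> bool * bool} => g (Ordinal (leq_trans lt_u le_S1n)))
  (core_map_out vS).2.
by rewrite /= (vtypeE _ (core_map u)) // (vtypeE _ u) -?sizeS // nth_index // -core_map_in.
Qed.

Lemma core_map_hom : is_core S1 ->
  (forall p q, p < size S1 -> q < size S1 -> adj S1 p q = adj S2 p q) -> is_hom core_map.
Proof.
move=> coreS1 adjS u v uv.
case: (boolP (u \in S2)) => uS; case: (boolP (v \in S2)) => vS.
- have x := core_map u; have lt_u : index u S2 < size S1 by rewrite sizeS index_mem.
  have lt_v : index v S2 < size S1 by rewrite sizeS index_mem.
  rewrite (core_map_in x uS) (core_map_in x vS) -adjE // adjS // (adjE u) -?sizeS //.
  by rewrite !nth_index.
- by case: (core_map_cross uS vS) => -> _.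
- by case: (core_map_cross vS uS) => _ ->.
- by apply: coreS1; [exact: (core_map_out uS).1 | exact: (core_map_out vS).1].
Qed.

Lemma core_map_onto : uniq S2 ->
  (forall tau : {ffun 'I_n -> bool * bool},
     size (type_class S1 tau) <= size (type_class S2 tau)) ->
  forall a, exists b, core_map b = a.
Proof.
move=> uniqS2 le_class a; case: (boolP (a \in S1)) => aS.
  have [b bS fb] := stretch_onto uniqS2 (eq_leq sizeS) aS.
  by exists b; rewrite /core_map bS fb.
set tau := vtype n S1 a.
have a_cls : a \in type_class S1 tau by rewrite mem_type_class aS eqxx.
have [b b_cls fb] := stretch_onto (uniq_type_class S2 tau) (le_class tau) a_cls.
move: (b_cls); rewrite mem_type_class => /andP[bS /eqP btau].
by exists b; rewrite /core_map (negbTE bS) btau fb.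
Qed.

End CoreMap.

Lemma himg_le_of_core n (E1 E2 : digraph) (S1 : seq (vert E1)) (S2 : seq (vert E2)) :
  is_core S1 -> uniq S2 -> size S1 = size S2 -> size S1 <= n ->
  (forall p q, p < size S1 -> q < size S1 -> adj S1 p q = adj S2 p q) ->
  (forall tau : {ffun 'I_n -> bool * bool},
     size (type_class S1 tau) <= size (type_class S2 tau)) ->
  (forall tau : {ffun 'I_n -> bool * bool},
     0 < size (type_class S2 tau) -> 0 < size (type_class S1 tau)) ->
  himg_le E1 E2.
Proof.
move=> coreS1 uniqS2 sizeS le_S1n adjS le_class class_pos.
have dflt (v : vert E2) : vert E1.
  have : has predT (if v \in S2 then S1 else type_class S1 (vtype n S2 v)).
    rewrite has_predT; case: (boolP (v \in S2)) => vS /=.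
      by rewrite sizeS -has_predT; apply/hasP; exists v.
    by apply: class_pos; rewrite -has_predT; apply/hasP; exists v; rewrite ?mem_type_class ?vS ?eqxx.
  by case: ifP => _ /hasP/sig2W[x].
by exists (core_map n S1 S2 dflt); split; [apply: core_map_hom | apply: core_map_onto].
Qed.

Lemma Av_N_no_antichain n k (s : nat -> digraph) : 2 * k < n ->
  (forall i, Av (N_dg n k) (s i)) -> exists i j, i <> j /\ himg_le (s i) (s j).
Proof.
move=> lt_kn sAv.
pose core i := constructive_indefinite_description _ (Av_N_core lt_kn (sAv i)).
have [i [j [lt_ij prof_ij]]] := dickson (fun i => @profile n _ (sval (core i))).
exists i, j; split; first by move=> eq_ij; rewrite eq_ij ltnn in lt_ij.
have [_ ltSi coreSi] := svalP (core i); have [uniqSj _ _] := svalP (core j).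
set Si := sval (core i) in prof_ij ltSi coreSi *; set Sj := sval (core j) in prof_ij uniqSj *.
have sizeS : size Si = size Sj.
  by have /zle_bool/esym/eqP := prof_ij (inl (inl (@Ordinal n.+1 _ (ltnW ltSi)))); rewrite /= eqxx.
apply: (himg_le_of_core (n := n) coreSi uniqSj sizeS) => [|p q ltp ltq | tau | tau].
- exact: ltnW.
- have lt_pn := leq_trans ltp (ltnW ltSi); have lt_qn := leq_trans ltq (ltnW ltSi).
  exact: zle_bool (prof_ij (inl (inr (Ordinal lt_pn, Ordinal lt_qn)))).
- by case: (prof_ij (inr tau)).
- by case: (prof_ij (inr tau)) => _; rewrite !lt0n => ->.
Qed.

Definition ecount (G : digraph) := #|[pred p : vert G * vert G | dedge p.1 p.2]|.

(* Since [ecount G <= dsize G ^ 2], [mu] decreases when [dsize] does, and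
   when [ecount] grows at constant [dsize]. *)
Definition mu (G : digraph) := (dsize G * dsize G + 1) * dsize G - ecount G.

Lemma ecount_le (G : digraph) : ecount G <= dsize G * dsize G.
Proof. by apply: leq_trans (max_card _) _; rewrite card_prod card_ord. Qed.

Lemma himg_le_of_ecount (A B : digraph) (f : vert B -> vert A) :
  bijective f -> is_hom f -> ecount A <= ecount B -> himg_le B A.
Proof.
move=> [g fK gK] f_hom le_AB; exists g; split=> [a a' aa' | b]; last by exists (f b).
pose ff (p : vert B * vert B) := (f p.1, f p.2).
have ff_inj : injective ff by move=> [x1 x2] [y1 y2] [/(can_inj fK) -> /(can_inj fK) ->].
have edges_img : ff @: [pred p : vert B * vert B | dedge p.1 p.2] =
                 [set p : vert A * vert A | dedge p.1 p.2].
  apply/eqP; rewrite eqEcard card_imset // cardsE le_AB andbT.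
  by apply/subsetP => _ /imsetP[p pE ->]; rewrite inE; apply: f_hom.
have : (a, a') \in [set p : vert A * vert A | dedge p.1 p.2] by rewrite inE.
by rewrite -edges_img => /imsetP[[b b'] bb' [-> ->]]; rewrite !fK.
Qed.

Lemma himg_le_bij (A B : digraph) : himg_le A B -> dsize A = dsize B ->
  exists2 f : vert B -> vert A, bijective f & is_hom f.
Proof.
move=> [f [f_hom f_onto]] eq_size; exists f => //.
have [g fK] := functional_choice _ f_onto.
have card_BA : #|vert B| <= #|vert A| by rewrite !card_ord eq_size.
have [h gK hK] := inj_card_bij (can_inj fK) card_BA.
by exists g => // b; rewrite -{1}(hK b) fK hK.
Qed.

Lemma mu_lt (A B : digraph) : himg_le A B -> ~ himg_le B A -> mu A < mu B.
Proof.
move=> le_AB not_le_BA; have := ecount_le A; have := ecount_le B.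
have [lt_size | gt_size | eq_size] := ltngtP (dsize A) (dsize B); rewrite /mu.
- move: (dsize A) (dsize B) (ecount A) (ecount B) lt_size => a [|b] // x y.
  rewrite ltnS => le_ab; have : (a * a + 1) * a <= (b * b + 1) * b.
    by apply: leq_mul => //; rewrite leq_add2r leq_mul.
  nia.
- by have := himg_le_dsize le_AB; rewrite leqNgt gt_size.
have [f f_bij f_hom] := himg_le_bij le_AB eq_size.
have lt_e : ecount B < ecount A.
  rewrite ltnNge; apply/negP => le_BA; apply: not_le_BA.
  exact: himg_le_of_ecount f_bij f_hom le_BA.
by nia.
Qed.

Lemma no_himg_descending (s : nat -> digraph) :
  ~ (forall i, himg_le (s i.+1) (s i) /\ ~ himg_le (s i) (s i.+1)).
Proof.
move=> desc; have mu_desc i : mu (s i) + i <= mu (s 0).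
  elim: i => [|i IH]; first by rewrite addn0.
  by have := mu_lt (desc i).1 (desc i).2; lia.
by have := mu_desc (mu (s 0)).+1; lia.
Qed.

Definition Nperfect (j : nat) := N_dg (2 * j) j.

Lemma Nperfect_on_nonedge j (y : 'I_(2 * j)) :
  exists z : 'I_(2 * j), ~~ N_edge j z y \/ ~~ N_edge j y z.
Proof.
have lt_y := ltn_ord y.
case: (boolP (odd y)) => odd_y.
  have lt_z : y.-1 < 2 * j by apply: leq_ltn_trans (leq_pred _) lt_y.
  exists (Ordinal lt_z); left; apply/N_nonedgeP; split=> //=.
  - by move: odd_y; case: (nat_of_ord y) => //= m; rewrite negbK.
  - by move: odd_y; case: (nat_of_ord y).
have lt_z : y.+1 < 2 * j by move: (even_halfK odd_y) lt_y; lia.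
by exists (Ordinal lt_z); right; apply/N_nonedgeP.
Qed.

Lemma Nperfect_himg_le_eq a b : himg_le (Nperfect a) (Nperfect b) -> a = b.
Proof.
move=> le_ab; have [f [f_hom f_onto]] := le_ab.
have pull x y : ~~ N_edge a (f x) (f y) -> ~~ N_edge b x y by apply: contra; exact: f_hom.
have f_inj : injective f.
  move=> x x' fxx'; have [y nonedge_y] := Nperfect_on_nonedge (f x).
  have [z fz] := f_onto y; rewrite -fz in nonedge_y; case: nonedge_y => [zx | xz].
  - by apply: N_nonedge_inj_r (pull _ _ zx) (pull _ _ _); rewrite -fxx'.
  - by apply: N_nonedge_inj_l (pull _ _ xz) (pull _ _ _); rewrite -fxx'.
have := himg_le_dsize le_ab; have := leq_card _ f_inj; rewrite !card_ord /=; lia.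
Qed.

Definition nonedges (D : digraph) := enum [pred p : vert D * vert D | ~~ dedge p.1 p.2].

Lemma mem_nonedges (D : digraph) p : (p \in nonedges D) = ~~ dedge p.1 p.2.
Proof. by rewrite mem_enum. Qed.

Section NperfectImage.
Variables (D : digraph) (j : nat) (f : 'I_(2 * j) -> vert D) (g : vert D -> 'I_(2 * j)).
Hypotheses (reflD : reflexive_dg D) (f_hom : @is_hom (Nperfect j) D f) (fK : cancel g f).

Lemma Nperfect_image_pull x y : ~~ dedge (f x) (f y) -> ~~ N_edge j x y.
Proof. by apply: contra; exact: f_hom. Qed.

Lemma Nperfect_image_nonedge u v : ~~ dedge u v -> ~~ odd (g u) /\ g v = (g u).+1 :> nat.
Proof.
by move=> uv; have /Nperfect_image_pull/N_nonedgeP[] : ~~ dedge (f (g u)) (f (g v)) by rewrite !fK.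
Qed.

Lemma Nperfect_image_matching : nonedge_matching (nonedges D).
Proof.
split=> [|p]; last by rewrite mem_nonedges.
apply: uniq_flat_pairs => [|[u v] | [u v] [u' v'] x]; rewrite ?enum_uniq ?mem_nonedges //=.
  by apply: contra => /eqP ->; exact: reflD.
move=> /Nperfect_image_nonedge[even_u gv] /Nperfect_image_nonedge[even_u' gv'].
rewrite !inE => /orP[] /eqP -> /orP[] /eqP e.
- by rewrite e; congr pair; apply: (can_inj fK); apply: val_inj; rewrite /= gv gv' e.
- by move: even_u; rewrite e gv' /= even_u'.
- by move: even_u'; rewrite -e gv /= even_u.
- rewrite e; congr pair; apply: (can_inj fK); apply: val_inj.
  by apply/eqP; rewrite -eqSS -gv -gv' e.
Qed.

Lemma Nperfect_image_unmatched : dsize D < 2 * j ->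
  exists w, w \notin flat_pairs (nonedges D).
Proof.
move=> lt_Dj; have /injectivePn[x [x' neq_xx' fxx']] : ~~ injectiveb f.
  by apply/injectiveP => f_inj; have := leq_card _ f_inj; rewrite !card_ord; lia.
exists (f x); rewrite mem_flat_pairs; apply/hasPn => -[u v].
rewrite mem_nonedges /= !inE => uv; apply/norP; split; apply/eqP => e.
  suff : x = x' by apply/eqP.
  by apply: (@N_nonedge_inj_l _ j _ _ (g v)); apply: Nperfect_image_pull; rewrite ?fK -?fxx' e.
suff : x = x' by apply/eqP.
by apply: (@N_nonedge_inj_r _ j (g u)); apply: Nperfect_image_pull; rewrite ?fK -?fxx' e.
Qed.

End NperfectImage.

Lemma N_of_himg_le_Nperfect (D : digraph) j : reflexive_dg D -> dsize D < 2 * j ->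
  himg_le D (Nperfect j) -> exists n k, 2 * k < n /\ dg_iso D (N_dg n k).
Proof.
move=> reflD lt_Dj [f [f_hom f_onto]]; have [g fK] := functional_choice _ f_onto.
have matchD := Nperfect_image_matching reflD f_hom fK.
have [w wD] := Nperfect_image_unmatched f_hom fK lt_Dj.
exists (dsize D), (size (nonedges D)); split.
  have : size (w :: flat_pairs (nonedges D)) <= size (enum 'I_(dsize D)).
    by apply: uniq_leq_size => [|v _]; rewrite /= ?wD ?matchD.1 ?mem_enum.
  by rewrite size_enum_ord /= size_flat_pairs => lt_PD; exact: lt_PD.
by apply: N_iso_of_matching => // u v; rewrite mem_nonedges.
Qed.

Theorem theorem4p6 (D : digraph) :
  reflexive_dg D ->
  (wqo_on (Av D) himg_le <->
   exists n k : nat, 2 * k < n /\ dg_iso D (N_dg n k)).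
Proof.
move=> reflD; split=> [[_ no_antichain] | [n [k [lt_kn isoD]]]].
  apply: NNPP => notN; apply: no_antichain.
  exists (fun i => Nperfect (i + dsize D).+1); split=> [i | i j neq_ij le_ij].
    split=> [|le_DN]; first exact: N_refl.
    by apply: notN; apply: N_of_himg_le_Nperfect reflD _ le_DN; lia.
  by apply: neq_ij; have := Nperfect_himg_le_eq le_ij; lia.
split=> [[s [_ desc]] | [s [sAv antichain]]]; first exact: no_himg_descending desc.
have [i [j [neq_ij le_ij]]] := Av_N_no_antichain lt_kn (fun i => Av_iso isoD (sAv i)).
exact: antichain neq_ij le_ij.
Qed.
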